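(* Let $G=(B\cup W,E)$ be a bipartite graph (an instance of Bipartite Influence), and let $B_0\subseteq B$ and $W_0\subseteq W$. Then $Ls(G)\leq Ls(G\setminus W_0)+|W_0|$, $Rs(G)\geq Rs(G\setminus B_0)-|B_0|$, $Ls(G)\geq Ls(G\setminus B_0)-|B_0|$, and $Rs(G)\leq Rs(G\setminus W_0)+|W_0|$.
   Context: Bipartite Influence is a two-player game (Left and Right) played on a bipartite graph $G=(B\cup W,E)$ whose vertices in $B$ are black and in $W$ white, every edge joining $B$ and $W$. Isolated vertices are credited to the owner of their colour (black to Left, white to Right) and removed. On her turn Left chooses a black vertex $x$ and removes $Rmv(G,x)$, consisting of $x$, its neighbours, and the vertices that become isolated after removing these; Right does the same with a white vertex. The score is (number of vertices credited to/removed by Left) minus (number credited to/removed by Right). Formally, if $G$ has no edges its value is $|B|-|W|$; otherwise $Ls(G)=\max_{x\in B\text{ non-isolated}}\{|Rmv(G,x)|+Rs(G\setminus Rmv(G,x))\}$ and $Rs(G)=\min_{y\in W\text{ non-isolated}}\{-|Rmv(G,y)|+Ls(G\setminus Rmv(G,y))\}$, where isolated vertices of $G$ contribute $|I_B|-|I_W|$ (black minus white isolated vertices) to both scores. $Ls$ (resp. $Rs$) is the optimal final score when Left (resp. Right) moves first. $G\setminus X$ denotes the subgraph induced on the remaining vertices. *)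

From HB Require Import structures.
From mathcomp Require Import all_boot all_order all_algebra.
Set Implicit Arguments. Unset Strict Implicit. Unset Printing Implicit Defensive.
Import Order.TTheory GRing.Theory Num.Theory.
Local Open Scope ring_scope.

(* A bipartite graph: vertex type T (finite), colouring [black] (black x =
   true: x in B; false: x in W), adjacency relation [e].  A position of the
   game is the induced subgraph on a vertex set S : {set T}. *)
Section Influence.
Variables (T : finType) (black : pred T) (e : rel T).

Definition has_nbr (S : {set T}) (x : T) : bool := [exists y in S, e x y].

Definition isoS (S : {set T}) : {set T} := [set x in S | ~~ has_nbr S x].

Definition coreS (S : {set T}) : {set T} := S :\: isoS S.

Definition credit (S : {set T}) : int :=
  (#|[set x in S | black x]|%:Z - #|[set x in S | ~~ black x]|%:Z)%R.

Definition nbhd (S : {set T}) (x : T) : {set T} := x |: [set y in S | e x y].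

Definition Rmv (S : {set T}) (x : T) : {set T} :=
  nbhd S x :|: isoS (S :\: nbhd S x).

(* score n left S : optimal score of G[S] with [left] to move (Left if true),
   computed with recursion fuel n. *)
Fixpoint score (n : nat) (left : bool) (S : {set T}) : int :=
  let C := coreS S in
  (credit (isoS S) +
  match n with
  | 0%N => 0
  | n'.+1 =>
    let A := [set x in C | black x == left] in
    let f := fun x => ((if left then 1 else -1) * #|Rmv C x|%:Z
                       + score n' (~~ left) (C :\: Rmv C x))%R in
    match [pick x in A] with
    | None => 0
    | Some x0 =>
        if left then \big[Order.max/f x0]_(x in A) f x
        else \big[Order.min/f x0]_(x in A) f x
    end
  end)%R.

(* Fuel #|S| suffices: every move removes at least one vertex. *)
Definition Ls (S : {set T}) : int := score #|S| true S.
Definition Rs (S : {set T}) : int := score #|S| false S.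

End Influence.

(* Deleting a white vertex w raises neither Ls nor Rs by more than one; iterating
   over W0 gives the two W0 inequalities, and exchanging the colours, which negates
   the scores and swaps the players, gives the two B0 inequalities.

   These one-vertex bounds are proved together with Rs <= Ls by induction on the
   number of vertices, for a graph C without isolated vertices (isolated vertices
   only add their credit).  In such a graph a move x isolates only vertices of the
   colour of x, so it is worth |N[x]| plus the score of C - N[x].  Deleting w
   isolates the set N of black vertices whose only neighbour is w; let
   C' = C - w - N.  A move x of C' can be copied in C: the two positions left
   differ by w and N, and w costs at most one by induction.  The only other moves
   of Left in C are the vertices of N, which take at most two vertices and leave
   C' plus part of N, and Rs <= Ls on C' handles them.  Finally, if Left can play
   x, deleting the white neighbours of x one at a time gives
   Rs(C) <= |N[x]| + Rs(C - N[x]) <= Ls(C). *)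

From HB Require Import structures.
From mathcomp Require Import all_boot all_order all_algebra.
From mathcomp Require Import zify.
Import Order.TTheory GRing.Theory Num.Theory.
Local Open Scope ring_scope.
Set Implicit Arguments. Unset Strict Implicit. Unset Printing Implicit Defensive.

Lemma ler_setD_card (T : finType) (F : {set T} -> int) (S W : {set T}) :
    (forall (X : {set T}) v, X \subset S -> v \in X -> v \in W ->
       F X <= F (X :\ v) + 1) ->
  F S <= F (S :\: W) + #|W|%:Z.
Proof.
have [n] := ubnP #|W|; elim: n W S => // n IH W S /ltnSE leWn step.
have [-> | [v vW]] := set_0Vmem W; first by rewrite setD0 cards0 addr0.
have le_Sv : F S <= F (S :\ v) + 1.
  case vS: (v \in S); first exact: step.
  by rewrite (setDidPl _) ?lerDl // disjoint_sym disjoints1 vS.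
have -> : S :\: W = (S :\ v) :\: (W :\ v).
  by apply/setP => u; rewrite !inE; case: (u =P v) => // ->; rewrite vW.
have cardW : #|W| = (#|W :\ v|).+1 by rewrite (cardsD1 v W) vW.
have IHv : F (S :\ v) <= F ((S :\ v) :\: (W :\ v)) + #|W :\ v|%:Z.
  apply: IH => [|X u sX uX /setD1P[_ uW]]; first by rewrite -cardW.
  by apply: step uX uW; apply: subset_trans sX (subsetDl _ _).
by move: le_Sv IHv; rewrite cardW; lia.
Qed.

Lemma card_setD_lt (T : finType) (S A : {set T}) (x : T) :
  x \in A -> x \in S -> (#|S :\: A| < #|S|)%N.
Proof.
move=> xA xS; apply: proper_card; rewrite properEneq subsetDl andbT.
by apply: contraTneq xS => SA; rewrite -SA inE xA.
Qed.

Lemma bigmax_opp (R : realDomainType) (I : finType) (P : pred I) (F : I -> R) z :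
  \big[Num.max/- z]_(i | P i) - F i = - \big[Num.min/z]_(i | P i) F i.
Proof. by rewrite (big_morph (fun x : R => - x) (@oppr_min _) (erefl (- z))). Qed.

Lemma bigmin_opp (R : realDomainType) (I : finType) (P : pred I) (F : I -> R) z :
  \big[Num.min/- z]_(i | P i) - F i = - \big[Num.max/z]_(i | P i) F i.
Proof. by rewrite (big_morph (fun x : R => - x) (@oppr_max _) (erefl (- z))). Qed.

Section Influence.
Variables (T : finType) (black : pred T) (e : rel T).

Implicit Types (A S X C I P Q W : {set T}) (l : bool) (u v w x y : T).
Local Notation iso := (isoS e).
Local Notation core := (coreS e).
Local Notation nbh := (nbhd e).
Local Notation cr := (credit black).
Local Notation score := (score black e).

Lemma has_nbrP S x : reflect (exists2 y, y \in S & e x y) (has_nbr e S x).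
Proof.
by apply: (iffP existsP) => [[y /andP[]]|[y yS exy]]; [exists y | exists y; apply/andP].
Qed.

Lemma in_iso S x : (x \in iso S) = (x \in S) && ~~ has_nbr e S x.
Proof. by rewrite inE. Qed.

Lemma in_core S x : (x \in core S) = (x \in S) && has_nbr e S x.
Proof. by rewrite !inE; case: (x \in S); case: has_nbr. Qed.

Lemma isoP S x : reflect (x \in S /\ forall y, y \in S -> ~~ e x y) (x \in iso S).
Proof.
rewrite in_iso; apply: (iffP andP) => -[xS nbr]; split=> //.
  by move=> y yS; apply: contra nbr => exy; apply/has_nbrP; exists y.
by apply/has_nbrP => -[y yS]; apply/negP/nbr.
Qed.

Lemma iso_sub S : iso S \subset S.
Proof. by apply/subsetP => x; rewrite in_iso => /andP[]. Qed.

Lemma core_sub S : core S \subset S.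
Proof. exact: subsetDl. Qed.

Definition moves l S := [set x in core S | black x == l].

Definition value l S := score #|S| l S.

Definition move_value l S x := (if l then 1 else -1) * #|Rmv e (core S) x|%:Z
  + value (~~ l) (core S :\: Rmv e (core S) x).

Lemma in_moves l S x : (x \in moves l S) = (x \in core S) && (black x == l).
Proof. by rewrite inE. Qed.

Lemma mem_Rmv S x : x \in Rmv e S x.
Proof. by rewrite !inE eqxx. Qed.

Lemma score_nomove n l S :
  [pick x in moves l S] = None -> score n l S = cr (iso S).
Proof. by case: n => [|n] /=; rewrite ?addr0 // -/(moves l S) => ->; rewrite addr0. Qed.

Lemma score_card0 n l S : #|S| = 0%N -> score n l S = cr (iso S).
Proof.
move/eqP; rewrite cards_eq0 => /eqP S0; apply: score_nomove.
by case: pickP => // x; rewrite in_moves in_core S0 inE.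
Qed.

Lemma score_stable n m l S :
  (#|S| <= n)%N -> (#|S| <= m)%N -> score n l S = score m l S.
Proof.
elim: n m l S => [|n IH] [|m] l S Sn Sm;
  try by rewrite !score_card0 //; apply/eqP; rewrite -leqn0.
rewrite /= -/(moves l S); congr (_ + _).
have core_le : (#|core S| <= #|S|)%N by apply: subset_leq_card; apply: core_sub.
case: pickP => // x0 x0m.
have E y : y \in moves l S ->
    (if l then 1 else -1) * #|Rmv e (core S) y|%:Z
      + score n (~~ l) (core S :\: Rmv e (core S) y)
  = (if l then 1 else -1) * #|Rmv e (core S) y|%:Z
      + score m (~~ l) (core S :\: Rmv e (core S) y).
  rewrite in_moves => /andP[/(card_setD_lt (mem_Rmv (core S) _)) ltS _].
  by rewrite (IH m) //; lia.
by case: l E x0m => /= E x0m; rewrite E //; apply: eq_bigr => y /E ->.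
Qed.

Lemma score_value n l S : (#|S| <= n)%N -> score n l S = value l S.
Proof. by move=> Sn; apply: score_stable. Qed.

Lemma value_unfold l S : value l S = cr (iso S) +
  match [pick x in moves l S] with
  | None => 0
  | Some x0 => if l then \big[Num.max/move_value l S x0]_(x in moves l S) move_value l S x
               else \big[Num.min/move_value l S x0]_(x in moves l S) move_value l S x
  end.
Proof.
rewrite /value; case def_n: #|S| => [|n].
  rewrite score_card0 //; case: pickP => [x|]; last by rewrite addr0.
  move/eqP: def_n; rewrite cards_eq0 => /eqP S0.
  by rewrite in_moves in_core S0 inE.
rewrite /= -/(moves l S); congr (_ + _).
case: pickP => // x0 x0m.
have E y : y \in moves l S -> (if l then 1 else -1) * #|Rmv e (core S) y|%:Z
    + score n (~~ l) (core S :\: Rmv e (core S) y) = move_value l S y.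
  rewrite in_moves => /andP[/(card_setD_lt (mem_Rmv (core S) _)) ltS _].
  by rewrite /move_value score_value //; have := subset_leq_card (core_sub S); lia.
by case: l E x0m => /= E x0m; rewrite E //; apply: eq_bigr => y /E.
Qed.

Lemma value_nomove l S : (forall x, x \notin moves l S) -> value l S = cr (iso S).
Proof.
move=> nomove; rewrite value_unfold.
by case: pickP => [x|_]; rewrite ?(negbTE (nomove x)) ?addr0.
Qed.

Lemma move_le_Ls S x :
  x \in moves true S -> cr (iso S) + move_value true S x <= value true S.
Proof.
move=> xm; rewrite value_unfold lerD2l; case: pickP => [x0 _|/(_ x)]; last by rewrite xm.
exact: le_bigmax_cond.
Qed.

Lemma Rs_le_move S y :
  y \in moves false S -> value false S <= cr (iso S) + move_value false S y.
Proof.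
move=> ym; rewrite value_unfold lerD2l; case: pickP => [y0 _|/(_ y)]; last by rewrite ym.
exact: bigmin_le_cond.
Qed.

Lemma Ls_le S x0 m : x0 \in moves true S ->
    (forall x, x \in moves true S -> cr (iso S) + move_value true S x <= m) ->
  value true S <= m.
Proof.
move=> x0m ub; rewrite value_unfold -lerBrDl.
case: pickP => [x1 x1m|/(_ x0)]; last by rewrite x0m.
by apply: bigmax_le => [|x xm]; rewrite lerBrDl; apply: ub.
Qed.

Lemma Rs_ge S y0 m : y0 \in moves false S ->
    (forall y, y \in moves false S -> m <= cr (iso S) + move_value false S y) ->
  m <= value false S.
Proof.
move=> y0m lb; rewrite value_unfold -lerBlDl.
case: pickP => [y1 y1m|/(_ y0)]; last by rewrite y0m.
by apply: le_bigmin => [|y ym]; rewrite lerBlDl; apply: lb.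
Qed.

Hypothesis e_sym : symmetric e.
Hypothesis e_bip : forall x y, e x y -> black x != black y.

Lemma nbr_colour x y : e x y -> black y = ~~ black x.
Proof. by move/e_bip; case: (black x); case: (black y). Qed.

Lemma same_colour_nonadj x y : black x = black y -> e x y = false.
Proof. by move=> bxy; apply: contraTF (eqxx (black x)) => /e_bip; rewrite bxy. Qed.

Lemma core_nbr S x : x \in core S -> exists2 y, y \in core S & e x y.
Proof.
rewrite in_core => /andP[xS /has_nbrP[y yS exy]]; exists y => //.
by rewrite in_core yS; apply/has_nbrP; exists x; rewrite // e_sym.
Qed.

Lemma iso_core S : iso (core S) = set0.
Proof.
apply/setP => x; rewrite in_iso in_set0; apply/negbTE; rewrite negb_and negbK.
by apply/orP; case xc: (x \in core S); [right; apply/has_nbrP/core_nbr | left].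
Qed.

Lemma coreE C : iso C = set0 -> core C = C.
Proof. by move=> C0; rewrite /coreS C0 setD0. Qed.

Lemma core_idem S : core (core S) = core S.
Proof. exact/coreE/iso_core. Qed.

Lemma iso_set0 : iso set0 = set0.
Proof. by apply/setP => v; rewrite in_iso in_set0. Qed.

Lemma iso_subset X X' v : X' \subset X -> v \in X' -> v \in iso X -> v \in iso X'.
Proof.
move=> sX vX' /isoP[_ noX]; apply/isoP; split=> // u uX'.
exact/noX/(subsetP sX).
Qed.

Lemma has_nbr_setD X I v : I \subset iso X -> v \in X ->
  has_nbr e (X :\: I) v = has_nbr e X v.
Proof.
move=> sI vX; apply/has_nbrP/has_nbrP => [[y]|[y yX evy]].
  by rewrite inE => /andP[_ yX] evy; exists y.
exists y => //; rewrite inE yX andbT; apply/negP => /(subsetP sI)/isoP[_ /(_ v vX)].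
by rewrite e_sym evy.
Qed.

Lemma iso_setD X I : I \subset iso X -> iso (X :\: I) = iso X :\: I.
Proof.
move=> sI; apply/setP => v; rewrite !(in_iso, in_setD).
by case vI: (v \in I); case vX: (v \in X); rewrite //= has_nbr_setD.
Qed.

Lemma core_setD X I : I \subset iso X -> core (X :\: I) = core X.
Proof.
move=> sI; apply/setP => v; rewrite !(in_core, in_setD).
case vI: (v \in I) => /=.
  by have /isoP[-> noX] := subsetP sI v vI; apply/esym/negbTE/has_nbrP => -[u /noX/negP].
by case vX: (v \in X); rewrite //= has_nbr_setD.
Qed.

Lemma credit_black X : {in X, forall v, black v} -> cr X = #|X|%:Z.
Proof.
move=> Xb; rewrite /credit (_ : [set v in X | black v] = X); last first.
  by apply/setP => v; rewrite inE; case: (boolP (v \in X)) => // /Xb.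
rewrite (_ : [set v in X | ~~ black v] = set0) ?cards0 ?subr0 //.
by apply/setP => v; rewrite !inE; case: (boolP (v \in X)) => // /Xb ->.
Qed.

Lemma credit_white X : {in X, forall v, ~~ black v} -> cr X = - #|X|%:Z.
Proof.
move=> Xw; rewrite /credit (_ : [set v in X | ~~ black v] = X); last first.
  by apply/setP => v; rewrite inE; case: (boolP (v \in X)) => // /Xw.
rewrite (_ : [set v in X | black v] = set0) ?cards0 ?sub0r //.
by apply/setP => v; rewrite !inE; case: (boolP (v \in X)) => // /Xw/negbTE ->.
Qed.

Lemma credit1 v : cr [set v] = if black v then 1 else -1.
Proof.
case bv: (black v); [rewrite credit_black | rewrite credit_white];
  by rewrite ?cards1 // => u /set1P ->; rewrite bv.
Qed.

Lemma credit0 : cr set0 = 0.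
Proof. by rewrite credit_black ?cards0 // => v; rewrite in_set0. Qed.

Lemma creditD A I : I \subset A -> cr A = cr I + cr (A :\: I).
Proof.
move=> sIA; rewrite /credit.
have cardP (P : pred T) : #|[set x in A | P x]| =
    (#|[set x in I | P x]| + #|[set x in A :\: I | P x]|)%N.
  rewrite -(cardsID I [set x in A | P x]); congr (_ + _)%N; apply: eq_card => x;
  by rewrite !inE; case xI: (x \in I); rewrite ?andbT ?andbF //= (subsetP sIA).
rewrite (cardP black) (cardP (fun x => ~~ black x)) !PoszD; lia.
Qed.

Lemma value0 l : value l set0 = 0.
Proof. by rewrite /value cards0 /= iso_set0 credit0 addr0. Qed.

Lemma value_iso l S : value l S = cr (iso S) + value l (core S).
Proof.
rewrite [in RHS]value_unfold iso_core credit0 add0r /moves /move_value core_idem.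
exact: value_unfold.
Qed.

Lemma value_setD_iso l X I : I \subset iso X -> value l X = cr I + value l (X :\: I).
Proof.
move=> sI; rewrite value_iso [value l (X :\: I)]value_iso iso_setD // core_setD //.
by rewrite (creditD sI) -addrA.
Qed.

Lemma value_setD1_iso l X v : v \in iso X -> value l X = cr [set v] + value l (X :\ v).
Proof. by move=> vX; apply: value_setD_iso; rewrite sub1set. Qed.

Lemma in_nbhd S x v : (v \in nbh S x) = (v == x) || (v \in S) && e x v.
Proof. by rewrite !inE. Qed.

Lemma card_Rmv C x : #|Rmv e C x| = (#|nbh C x| + #|iso (C :\: nbh C x)|)%N.
Proof.
rewrite cardsU (_ : _ :&: _ = set0) ?cards0 ?subn0 //; apply/setP => v.
by rewrite !inE; case: (_ || _).
Qed.

Lemma setD_Rmv C x : C :\: Rmv e C x = core (C :\: nbh C x).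
Proof.
apply/setP => v; rewrite /coreS !in_setD in_setU.
by case: (v \in nbh C x); case: (v \in iso _); case: (v \in C).
Qed.

Lemma iso_move_colour C x v :
  iso C = set0 -> x \in C -> v \in iso (C :\: nbh C x) -> black v = black x.
Proof.
move=> C0 xC /isoP[]; rewrite in_setD in_nbhd => /andP[vnx vC] noQ.
have : v \notin iso C by rewrite C0 in_set0.
rewrite in_iso vC negbK => /has_nbrP[u uC evu].
move: (contraL (noQ u) evu); rewrite in_setD in_nbhd uC andbT negbK.
case/orP=> [/eqP ux | exu]; first by rewrite -ux e_sym evu vC orbT in vnx.
by apply: negb_inj; rewrite -(nbr_colour evu) (nbr_colour exu).
Qed.

Lemma move_value_Left C x : iso C = set0 -> x \in moves true C ->
  move_value true C x = #|nbh C x|%:Z + value false (C :\: nbh C x).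
Proof.
move=> C0; rewrite in_moves coreE // => /andP[xC /eqP bx].
rewrite /move_value /= coreE // card_Rmv setD_Rmv [value false (C :\: _)]value_iso.
rewrite (credit_black (X := iso _)) => [|v /(iso_move_colour C0 xC)->] //; lia.
Qed.

Lemma move_value_Right C y : iso C = set0 -> y \in moves false C ->
  move_value false C y = - #|nbh C y|%:Z + value true (C :\: nbh C y).
Proof.
move=> C0; rewrite in_moves coreE // => /andP[yC /eqP by_].
rewrite /move_value /= coreE // card_Rmv setD_Rmv [value true (C :\: _)]value_iso.
rewrite (credit_white (X := iso _)) => [|v /(iso_move_colour C0 yC)->]; last by rewrite by_.
lia.
Qed.

Lemma value_delete_core l S w :
  w \in core S -> value l (S :\ w) = cr (iso S) + value l (core S :\ w).
Proof.
move=> wc; have wiso : w \notin iso S by move: wc; rewrite inE => /andP[].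
have sI : iso S \subset iso (S :\ w).
  apply/subsetP => v vi; apply: (iso_subset (subsetDl S [set w]) _ vi).
  rewrite in_setD1 (subsetP (iso_sub S) v vi) andbT.
  by apply: contraNneq wiso => <-.
rewrite (value_setD_iso _ sI); congr (_ + value l _).
apply/setP => v; rewrite /coreS !in_setD !in_set1.
by case: (v \in iso S); case: (v == w); case: (v \in S).
Qed.

Definition white_deletion_bound l S :=
  forall w, w \in S -> ~~ black w -> value l S <= value l (S :\ w) + 1.

Lemma white_deletion_core l S :
    (forall w, w \in core S -> ~~ black w ->
       value l (core S) <= value l (core S :\ w) + 1) ->
  white_deletion_bound l S.
Proof.
move=> bound w wS ww; case wi: (w \in iso S).
  by rewrite (value_setD1_iso _ wi) credit1 (negbTE ww); lia.
have wc : w \in core S by rewrite inE wi wS.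
by rewrite value_iso value_delete_core // -[_ + _ + 1]addrA lerD2l; apply: bound.
Qed.

Section DeleteWhite.
Variables (C : {set T}) (w : T).
Hypotheses (C0 : iso C = set0) (wC : w \in C) (ww : ~~ black w).

Local Notation N := (iso (C :\ w)).
Local Notation C' := (core (C :\ w)).

Lemma C_has_nbr v : v \in C -> exists2 u, u \in C & e v u.
Proof.
move=> vC; have : v \notin iso C by rewrite C0 in_set0.
by rewrite in_iso vC negbK => /has_nbrP.
Qed.

Lemma pendantP v : v \in N ->
  [/\ v \in C, v != w, black v, e v w & forall u, u \in C -> e v u -> u = w].
Proof.
move/isoP => [vD noD]; move: vD; rewrite in_setD1 => /andP[vw vC].
have only u : u \in C -> e v u -> u = w.
  move=> uC evu; apply/eqP; apply: contraTT evu => uw.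
  by apply: noD; rewrite in_setD1 uw uC.
have [u uC evu] := C_has_nbr vC; have uw := only u uC evu; subst u.
by split=> //; move: ww; rewrite (nbr_colour evu) negbK.
Qed.

Lemma in_C' v : (v \in C') = [&& v \in C, v != w & v \notin N].
Proof.
rewrite /coreS in_setD in_setD1.
by case: (v \in C); case: (v != w); case: (v \in iso _).
Qed.

Lemma value_delete l : value l (C :\ w) = #|N|%:Z + value l C'.
Proof. by rewrite value_iso credit_black // => v /pendantP[]. Qed.

Lemma card_C'_lt : (#|C'| < #|C|)%N.
Proof.
rewrite proper_card // properEneq; apply/andP; split.
  by apply: contraNneq ww => /setP/(_ w); rewrite in_C' wC eqxx.
by apply/subsetP => v; rewrite in_C' => /andP[].
Qed.

Lemma nbhd_C' x : x \in C' -> nbh C' x = nbh C x :\ w.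
Proof.
rewrite in_C' => /and3P[xC xw xN]; apply/setP => v; rewrite in_setD1 !in_nbhd in_C'.
case: (v =P x) => [->|_] /=; first by rewrite xw.
case evx: (e x v); rewrite ?andbF ?andbT //.
suff vN : v \notin N by rewrite vN andbT andbC.
by apply: contra xw => /pendantP[_ _ _ _ /(_ x xC)]; rewrite e_sym evx => /(_ isT)->.
Qed.

Lemma card_nbhd_C' x : x \in C' -> #|nbh C x| = (e x w + #|nbh C' x|)%N.
Proof.
move=> xC'; have xw : x != w by move: xC'; rewrite in_C' => /and3P[].
by rewrite nbhd_C' // (cardsD1 w) in_nbhd wC eq_sym (negbTE xw).
Qed.

Lemma value_mimic l x : x \in C' ->
  value l ((C :\: nbh C x) :\ w) = #|N|%:Z + value l (C' :\: nbh C' x).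
Proof.
move=> xC'; have /and3P[xC xw xN] : [&& x \in C, x != w & x \notin N] by rewrite -in_C'.
have sub : N \subset iso ((C :\: nbh C x) :\ w).
  apply/subsetP => v vN; have [vC vw _ _ vonly] := pendantP vN.
  apply/isoP; split.
    rewrite in_setD1 vw in_setD in_nbhd vC /= andbT negb_or; apply/andP; split.
      by apply: contraNneq xN => <-.
    by apply/negP; rewrite e_sym => /(vonly x xC) xw'; rewrite xw' eqxx in xw.
  move=> z; rewrite in_setD1 in_setD => /and3P[zw _ zC]; apply: contra zw => evz.
  by rewrite (vonly z zC evz).
rewrite (value_setD_iso _ sub) credit_black => [|v /pendantP[] //].
congr (_ + value l _); apply/setP => v.
rewrite nbhd_C' // [v \in C' :\: _]in_setD in_C' !in_setD !in_set1.
by case: (v \in N); case: (v == w); case: (v \in nbh C x); case: (v \in C).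
Qed.

Lemma Left_move_pendant x : value false C' <= value true C' -> x \in N ->
  move_value true C x <= #|N|%:Z + value true C' + 1.
Proof.
move=> LR xN; have [xC xw bx exw xonly] := pendantP xN.
rewrite move_value_Left //; last by rewrite in_moves coreE // xC bx.
have nbx : (#|nbh C x| <= 2)%N.
  apply: (@leq_trans #|[set x; w]|); last by rewrite cards2 xw.
  apply: subset_leq_card; apply/subsetP => v.
  by rewrite in_nbhd !inE => /orP[-> // | /andP[vC /(xonly v vC)->]]; rewrite eqxx orbT.
have sub : N :\ x \subset iso (C :\: nbh C x).
  apply/subsetP => v; rewrite in_setD1 => /andP[vx vN].
  have [vC vw bv evw vonly] := pendantP vN.
  apply/isoP; split.
    by rewrite in_setD in_nbhd vC (negbTE vx) same_colour_nonadj // bx bv.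
  move=> z; rewrite in_setD in_nbhd => /andP[zn zC]; apply: contra zn => evz.
  by rewrite (vonly z zC evz) wC exw orbT.
have eqQ : (C :\: nbh C x) :\: (N :\ x) = C'.
  apply/setP => v; rewrite in_C' !in_setD in_set1 in_nbhd.
  case vC: (v \in C); rewrite ?andbF //= ?andbT.
  have -> : e x v = (v == w) by apply/idP/eqP => [/(xonly v vC)|->].
  case: (v =P x) => [->|_]; first by rewrite xN /= andbF.
  by case: (v == w); case: (v \in N).
rewrite (value_setD_iso _ sub) eqQ credit_black => [|v /setD1P[_ /pendantP[]] //].
by move: nbx LR; rewrite (cardsD1 x N) xN; lia.
Qed.

Lemma Left_move_mimic x : x \in moves true C' ->
    white_deletion_bound false (C :\: nbh C x) ->
  move_value true C x <= #|N|%:Z + move_value true C' x + 1.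
Proof.
move=> xm' IHB; have := xm'; rewrite in_moves core_idem => /andP[xC' /eqP bx].
have xm : x \in moves true C.
  by rewrite in_moves (coreE C0) bx andbT; move: xC'; rewrite in_C' => /and3P[].
rewrite move_value_Left // move_value_Left ?iso_core // (card_nbhd_C' xC').
have := value_mimic false xC'; case exw: (e x w) => /=.
  rewrite (setDidPl _); last by rewrite disjoint_sym disjoints1 !inE exw wC orbT.
  lia.
have wQ : w \in C :\: nbh C x.
  rewrite in_setD in_nbhd wC exw andbT andbF orbF.
  by apply: contraNneq ww => ->; rewrite bx.
by have := IHB w wQ ww; lia.
Qed.

Lemma Right_move_mimic y : y \in moves false C' ->
    white_deletion_bound true (C :\: nbh C y) ->
  move_value false C y <= #|N|%:Z + move_value false C' y + 1.
Proof.
move=> ym' IHA; have := ym'; rewrite in_moves core_idem => /andP[yC' /eqP by_].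
have ym : y \in moves false C.
  by rewrite in_moves (coreE C0) by_ andbT; move: yC'; rewrite in_C' => /and3P[].
rewrite move_value_Right // move_value_Right ?iso_core // (card_nbhd_C' yC').
rewrite same_colour_nonadj ?by_ ?(negbTE ww) //=.
have wQ : w \in C :\: nbh C y.
  rewrite in_setD in_nbhd wC same_colour_nonadj ?by_ ?(negbTE ww) // andbT andbF orbF.
  by move: yC'; rewrite in_C' eq_sym => /and3P[].
by have := IHA w wQ ww; rewrite (value_mimic true yC'); lia.
Qed.

Lemma Ls_delete_white_core :
    value false C' <= value true C' ->
    (forall Q, (#|Q| < #|C|)%N -> white_deletion_bound false Q) ->
  value true C <= value true (C :\ w) + 1.
Proof.
move=> LR IHB; rewrite value_delete.
have [u uC ewu] := C_has_nbr wC.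
have um : u \in moves true C by rewrite in_moves coreE // uC (nbr_colour ewu) ww.
apply: (Ls_le um) => x xm; rewrite C0 credit0 add0r.
have := xm; rewrite in_moves coreE // => /andP[xC /eqP bx].
case xN: (x \in N); first exact: Left_move_pendant.
have xm' : x \in moves true C'.
  rewrite in_moves core_idem in_C' xC xN bx !andbT /=.
  by apply: contraNneq ww => <-; rewrite bx.
have := move_le_Ls xm'; rewrite iso_core credit0 add0r.
have := Left_move_mimic xm' (IHB _ (card_setD_lt (setU11 x _) xC)); lia.
Qed.

Lemma Rs_delete_white_core :
    (forall P, (#|P| < #|C|)%N -> white_deletion_bound true P) ->
  value false C <= value false (C :\ w) + 1.
Proof.
move=> IHA; rewrite value_delete.
case: (pickP (fun y => y \in moves false C')) => [y0 y0m | noy].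
  suff : value false C - (#|N|%:Z + 1) <= value false C' by lia.
  apply: (Rs_ge y0m) => y ym; rewrite iso_core credit0 add0r.
  have := ym; rewrite in_moves core_idem => /andP[yC' /eqP by_].
  have yC : y \in C by move: yC'; rewrite in_C' => /and3P[].
  have ymC : y \in moves false C by rewrite in_moves coreE // yC by_.
  have := Rs_le_move ymC; rewrite C0 credit0 add0r.
  have := Right_move_mimic ym (IHA _ (card_setD_lt (setU11 y _) yC)); lia.
(* Without white vertices the isolation-free C' is empty, so Right can take all of C
   by playing w. *)
have C'0 : C' = set0.
  apply/setP => v; rewrite in_set0; apply/negP => vC'.
  have [u uC' evu] := core_nbr vC'.
  case bv: (black v); [move: (noy u) | move: (noy v)];
    by rewrite /= in_moves core_idem ?uC' ?vC' ?(nbr_colour evu) bv.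
have wm : w \in moves false C by rewrite in_moves coreE // wC (negbTE ww).
have Q0 : C :\: nbh C w = set0.
  apply/setP => v; rewrite in_setD in_nbhd in_set0; case vC: (v \in C); rewrite ?andbF //=.
  case: (v =P w) => //= /eqP vw; rewrite andbT; apply/negbF.
  have : v \notin C' by rewrite C'0 in_set0.
  by rewrite in_C' vC vw /= negbK => /pendantP[_ _ _]; rewrite e_sym.
have := Rs_le_move wm; rewrite C0 credit0 add0r move_value_Right // Q0 C'0 !value0; lia.
Qed.

End DeleteWhite.

Lemma Rs_le_Ls_core C : iso C = set0 ->
    (forall X, X \subset C -> white_deletion_bound false X) ->
  value false C <= value true C.
Proof.
move=> C0 IHB; case: (pickP (fun x => x \in moves true C)) => [x xm | nox]; last first.
  rewrite (value_nomove (l := true)) => [|x]; last by rewrite nox.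
  rewrite value_nomove // => y; apply/negP; rewrite in_moves => /andP[yc /eqP by_].
  have [u uc eyu] := core_nbr yc.
  by move: (nox u); rewrite /= in_moves uc (nbr_colour eyu) by_.
have := move_le_Ls xm; rewrite C0 credit0 add0r move_value_Left //.
have := xm; rewrite in_moves coreE // => /andP[xC /eqP bx].
set W := nbh C x :\ x.
have le_W : value false C <= value false (C :\: W) + #|W|%:Z.
  apply: ler_setD_card => X v sX vX; rewrite in_setD1 in_nbhd => /andP[vx].
  rewrite (negbTE vx) => /andP[_ exv].
  by apply: (IHB X sX v vX); rewrite (nbr_colour exv) bx.
have xi : x \in iso (C :\: W).
  apply/isoP; split; first by rewrite in_setD in_setD1 eqxx xC.
  move=> z; rewrite in_setD in_setD1 in_nbhd => /andP[zW zC]; apply: contra zW => exz.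
  by rewrite zC exz orbT andbT; apply: contraTneq exz => ->; rewrite same_colour_nonadj.
have eqW : (C :\: W) :\ x = C :\: nbh C x.
  by apply/setP => v; rewrite !in_setD !in_set1 in_nbhd; case: (v =P x).
move: le_W; rewrite (value_setD1_iso _ xi) credit1 bx eqW (cardsD1 x (nbh C x)) setU11 -/W.
lia.
Qed.

Lemma white_deletion_bounds S :
  [/\ white_deletion_bound true S, white_deletion_bound false S &
      value false S <= value true S].
Proof.
have [n] := ubnP #|S|; elim: n S => // n IH S /ltnSE leSn.
have core_le X : (#|core X| <= #|X|)%N := subset_leq_card (core_sub X).
have IHB X : (#|X| <= n)%N -> white_deletion_bound false X.
  move=> leXn; apply: white_deletion_core => w wc ww.
  apply: (Rs_delete_white_core (iso_core X) wc ww) => P ltP.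
  by have [] := IH P (leq_trans ltP (leq_trans (core_le X) leXn)).
split; last first.
- rewrite [value false S]value_iso [value true S]value_iso lerD2l.
  apply: Rs_le_Ls_core (iso_core S) _ => X sX; apply: IHB.
  exact: leq_trans (subset_leq_card sX) (leq_trans (core_le S) leSn).
- exact: IHB.
apply: white_deletion_core => w wc ww.
have lt_core P : (#|P| < #|core S|)%N -> (#|P| < n)%N.
  by move=> ltP; apply: leq_trans ltP (leq_trans (core_le S) leSn).
apply: (Ls_delete_white_core (iso_core S) wc ww).
  by have [] := IH _ (lt_core _ (card_C'_lt wc ww)).
by move=> Q /lt_core/IH[].
Qed.

Lemma value_setD_whites l S W : {in W, forall v, ~~ black v} ->
  value l S <= value l (S :\: W) + #|W|%:Z.
Proof.
move=> Ww; apply: ler_setD_card => X v _ vX /Ww wv.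
by have [LB RB _] := white_deletion_bounds X; case: l; [apply: LB | apply: RB].
Qed.

End Influence.

Lemma Ls_setD_whites (T : finType) (black : pred T) (e : rel T) :
    symmetric e -> (forall x y, e x y -> black x != black y) ->
  forall S W : {set T}, {in W, forall v, ~~ black v} ->
  Ls black e S <= Ls black e (S :\: W) + #|W|%:Z.
Proof. by move=> e_sym e_bip S W; apply: (value_setD_whites e_sym e_bip true). Qed.

Lemma Rs_setD_whites (T : finType) (black : pred T) (e : rel T) :
    symmetric e -> (forall x y, e x y -> black x != black y) ->
  forall S W : {set T}, {in W, forall v, ~~ black v} ->
  Rs black e S <= Rs black e (S :\: W) + #|W|%:Z.
Proof. by move=> e_sym e_bip S W; apply: (value_setD_whites e_sym e_bip false). Qed.

Section ColourSwap.
Variables (T : finType) (black : pred T) (e : rel T).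
Local Notation white := (fun x => ~~ black x).

Lemma credit_swap (X : {set T}) : credit white X = - credit black X.
Proof.
rewrite /credit opprB (_ : [set x in X | ~~ ~~ black x] = [set x in X | black x]) //.
by apply/setP => x; rewrite !inE negbK.
Qed.

Lemma score_swap n l (S : {set T}) : score white e n l S = - score black e n (~~ l) S.
Proof.
elim: n l S => [|n IH] l S; first by rewrite /= !addr0 credit_swap.
rewrite /= credit_swap [in RHS]opprD; congr (_ + _).
have -> : [set x in coreS e S | ~~ black x == l] = [set x in coreS e S | black x == ~~ l].
  by apply/setP => x; rewrite !inE; case: (black x); case: l.
case: pickP => [x0 _|_]; last by rewrite oppr0.
have E x : (if l then 1 else -1) * #|Rmv e (coreS e S) x|%:Z
      + score white e n (~~ l) (coreS e S :\: Rmv e (coreS e S) x)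
    = - ((if ~~ l then 1 else -1) * #|Rmv e (coreS e S) x|%:Z
      + score black e n (~~ ~~ l) (coreS e S :\: Rmv e (coreS e S) x)).
  by rewrite IH negbK; case: l; rewrite /= ?mul1r ?mulN1r ?opprD ?opprK.
case: l E => /= E; rewrite (eq_bigr _ (fun x _ => E x)) E.
  exact: bigmax_opp.
exact: bigmin_opp.
Qed.

Lemma Ls_swap (S : {set T}) : Ls white e S = - Rs black e S.
Proof. exact: score_swap. Qed.

Lemma Rs_swap (S : {set T}) : Rs white e S = - Ls black e S.
Proof. exact: score_swap. Qed.

End ColourSwap.

Theorem mainTheorem7 (T : finType) (black : pred T) (e : rel T)
  (e_sym : symmetric e)
  (e_bip : forall x y, e x y -> black x != black y)
  (B0 W0 : {set T})
  (hB0 : forall x, x \in B0 -> black x)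
  (hW0 : forall x, x \in W0 -> ~~ black x) :
  [/\ Ls black e [set: T] <= Ls black e (~: W0) + #|W0|%:Z,
      Rs black e [set: T] >= Rs black e (~: B0) - #|B0|%:Z,
      Ls black e [set: T] >= Ls black e (~: B0) - #|B0|%:Z &
      Rs black e [set: T] <= Rs black e (~: W0) + #|W0|%:Z].
Proof.
have e_bipN x y : e x y -> ~~ black x != ~~ black y.
  by move/e_bip; case: (black x); case: (black y).
have hB0N : {in B0, forall v, ~~ ~~ black v} by move=> v /hB0 ->.
have := Ls_setD_whites e_sym e_bip [set: T] hW0.
have := Rs_setD_whites e_sym e_bip [set: T] hW0.
have := Ls_setD_whites e_sym e_bipN [set: T] hB0N.
have := Rs_setD_whites e_sym e_bipN [set: T] hB0N.
rewrite !setTD !Ls_swap !Rs_swap; split; lia.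
Qed.
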